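(* Let $\vec q\subseteq\mathrm{qVars}$, let $Q$ be an orthogonal projection on $\mathcal H_{\vec q}$, and $Q^\perp=I-Q$. (a) (H.boostRep) For any $p\in(0,1)$ and $\varepsilon\in(0,p)$, $$\{pI,\;I\}\,\square\,\{Q_{\vec q},\;I\}\ \hookrightarrow_{\mathrm{tot}}^{*}\ \mathbf{repeat}\ \lceil\log_{1-\varepsilon}(1-p)\rceil\ \mathbf{do}\ \big(\mathbf{if}\ Q^\perp[\vec q]\ \mathbf{then}\ \{\varepsilon Q^\perp_{\vec q},\;Q^\perp_{\vec q}\}\,\square\,\{Q_{\vec q},\;I\}\big).$$ (b) (H.boostWhile) For any $\varepsilon\in(0,1)$, $$\{I\}\,\square\,\{Q_{\vec q}\}\ \hookrightarrow_{\mathrm{tot}}^{*}\ \mathbf{while}\ Q^\perp[\vec q]\ \mathbf{do}\ \{\varepsilon Q^\perp_{\vec q},\;Q^\perp_{\vec q}\}\,\square\,\{Q_{\vec q},\;I\}.$$ Here $\{P,P'\}\square\{Q,Q'\}$ denotes a single hole carrying the two specifications $(P,Q)$ and $(P',Q')$.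
   Context: Quantum setting. There is a finite set $\mathrm{qVars}$ of quantum variables; each $q$ has Hilbert space $\mathcal H_q=\mathbb C^{\Sigma_q}$ ($\Sigma_q$ finite) with standard orthonormal basis $\{|x\rangle\}_{x\in\Sigma_q}$. For a set $\vec q\subseteq\mathrm{qVars}$, $\mathcal H_{\vec q}=\bigotimes_{q\in\vec q}\mathcal H_q$ with standard basis labelled by $\Sigma_{\vec q}=\prod_{q\in\vec q}\Sigma_q$, and $\mathcal H=\mathcal H_{\mathrm{qVars}}$. For an operator $A$ on $\mathcal H_{\vec q}$, $A_{\vec q}=A\otimes I$ on $\mathcal H$. $\preceq$ is the Löwner order. A partial state is a positive semidefinite (PSD) $\rho$ on $\mathcal H$ with $\operatorname{tr}\rho\le1$. A predicate is an operator $P$ on $\mathcal H$ with $0\preceq P\preceq I$; ''$P\Rightarrow Q$'' means $P\preceq Q$. A measurement on $\vec q$ is a family $\vec M=\{M_\omega\}_{\omega\in\Omega}$ ($\Omega$ finite) of PSD operators on $\mathcal H_{\vec q}$ with $\sum_\omega M_\omega=I$; write $\mathcal M_{\omega}(X)=\sqrt{M_{\omega,\vec q}}\,X\,\sqrt{M_{\omega,\vec q}}$. A binary measurement is given by an operator $B$ on $\mathcal H_{\vec q}$ with $0\preceq B\preceq I$, and $\mathcal B_{0,\vec q}(X)=\sqrt{(I-B)_{\vec q}}\,X\sqrt{(I-B)_{\vec q}}$, $\mathcal B_{1,\vec q}(X)=\sqrt{B_{\vec q}}\,X\sqrt{B_{\vec q}}$. Quantum while language: $S::=\mathbf{skip}\mid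 \vec q:=|0\rangle\mid \vec q\mathrel{*}=U\mid S_1;S_2\mid \mathbf{repeat}\ N\ \mathbf{do}\ S\mid \mathbf{case}\ \vec M[\vec q]\ \mathbf{of}\ \{\omega: S_\omega\}_{\omega\in\Omega}\mid \mathbf{while}\ B[\vec q]\ \mathbf{do}\ S$, with $U$ unitary on $\mathcal H_{\vec q}$, $N\in\mathbb N$. Denotational semantics $[\![S]\!]$ on partial states: $[\![\mathbf{skip}]\!](\rho)=\rho$; $[\![\vec q:=|0\rangle]\!](\rho)=\sum_{x\in\Sigma_{\vec q}}|0\rangle\langle x|_{\vec q}\,\rho\,|x\rangle\langle0|_{\vec q}$; $[\![\vec q\mathrel{*}=U]\!](\rho)=U_{\vec q}\rho U_{\vec q}^\dagger$; $[\![S_1;S_2]\!]=[\![S_2]\!]\circ[\![S_1]\!]$; $[\![\mathbf{repeat}\ N\ \mathbf{do}\ S]\!]=[\![S]\!]^N$; $[\![\mathbf{case}\ldots]\!](\rho)=\sum_\omega[\![S_\omega]\!](\mathcal M_\omega(\rho))$; $[\![\mathbf{while}\ B[\vec q]\ \mathbf{do}\ S]\!](\rho)=\sum_{k\ge0}(\mathcal B_{0,\vec q}\circ([\![S]\!]\circ\mathcal B_{1,\vec q})^k)(\rho)$. Hoare triples: $\models_{\mathrm{tot}}\{P\}S\{Q\}$ iff $\operatorname{tr}(P\rho)\le\operatorname{tr}(Q[\![S]\!](\rho))$ for all partial states $\rho$; $\models_{\mathrm{par}}\{P\}S\{Q\}$ iff $\operatorname{tr}(P\rho)\le\operatorname{tr}(Q[\![S]\!](\rho))+\operatorname{tr}\rho-\operatorname{tr}[\![S]\!](\rho)$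 for all partial states $\rho$. Syntactic sugar: $\mathbf{if}\ B[\vec q]\ \mathbf{then}\ S_1\ \mathbf{else}\ S_0$ abbreviates $\mathbf{case}\ \{1:B,0:I-B\}[\vec q]\ \mathbf{of}\ \{1:S_1,0:S_0\}$; omitting else means $S_0=\mathbf{skip}$. Programs with holes. The grammar is extended by holes $\{P\}\,\square\,\{Q\}$ ($P,Q$ predicates); more generally a hole may carry a family of specifications $\{P_\lambda\}\,\square\,\{Q_\lambda\}$, $\lambda\in\Lambda$ (written e.g. $\{P,P'\}\square\{Q,Q'\}$ for two). A program without holes is concrete. A refinement rule applied to a hole with a family must have its side conditions satisfied for every $\lambda$; the predicates it introduces may depend on $\lambda$, but the syntactic program produced (variables, unitaries, measurements, $N$, $B$) is the same for all $\lambda$; holes it creates carry the families indexed by $\lambda$ together with any newly introduced index. Refinement for partial correctness $\hookrightarrow_{\mathrm{par}}$ (for predicates $P,Q$): (H.skip) $\{P\}\square\{Q\}\hookrightarrow\mathbf{skip}$ if $P\Rightarrow Q$; (H.init) $\{P\}\square\{Q\}\hookrightarrow\vec q:=|0\rangle$ if $P\Rightarrow\sum_{x\in\Sigma_{\vec q}}|x\rangle\langle0|_{\vec q}Q|0\rangle\langle x|_{\vec q}$; (H.unit) $\{P\}\square\{Q\}\hookrightarrow\vec q\mathrel{*}=U$ if $P\Rightarrow U_{\vec q}^\dagger QU_{\vec q}$; (H.seq) $\{P\}\square\{Q\}\hookrightarrow\{P\}\square\{R\};\{R\}\square\{Q\}$ for any predicate $R$; (HP.split) $\{P\}\square\{Q\}\hookrightarrow\{P_\gamma\}\square\{Q_\gamma\}$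 ($\gamma\in\Gamma$) if $P\Rightarrow\sum_\gamma p_\gamma P_\gamma$ and $\sum_\gamma p_\gamma Q_\gamma\Rightarrow Q$ for a probability distribution $(p_\gamma)$; (H.repeat) $\{P\}\square\{Q\}\hookrightarrow\mathbf{repeat}\ N\ \mathbf{do}\ \{R_j\}\square\{R_{j+1}\}$ (family over $j\in\{0,\dots,N-1\}$) for predicates $R_0,\dots,R_N$ with $P\Rightarrow R_0$, $R_N\Rightarrow Q$; (H.case) $\{P\}\square\{Q\}\hookrightarrow\mathbf{case}\ \vec M[\vec q]\ \mathbf{of}\ \{\omega:\{P_\omega\}\square\{Q\}\}_{\omega}$ if $P\Rightarrow\sum_\omega\mathcal M_\omega(P_\omega)$; (HP.while) $\{P\}\square\{Q\}\hookrightarrow\mathbf{while}\ B[\vec q]\ \mathbf{do}\ \{R\}\square\{\mathcal B_{0,\vec q}(Q)+\mathcal B_{1,\vec q}(R)\}$ for a predicate $R$ with $P\Rightarrow\mathcal B_{0,\vec q}(Q)+\mathcal B_{1,\vec q}(R)$. Composite rules: (C.seqL/C.seqR/C.repeat/C.case/C.while) if $S'\hookrightarrow S$ then replacing one occurrence of $S'$ as the left or right component of a sequence, the body of a repeat, one branch of a case, or the body of a while by $S$ is a refinement step. Refinement for total correctness $\hookrightarrow_{\mathrm{tot}}$ uses all (H.* ) and (C.* ) rules above but replaces (HP.while) by (HT.while): $\{P\}\square\{Q\}\hookrightarrow\mathbf{while}\ B[\vec q]\ \mathbf{do}\ \{R_{n+1}\}\square\{\mathcal B_{0,\vec q}(Q)+\mathcal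 B_{1,\vec q}(R_n)\}$ (family over $n\in\mathbb N$) for predicates $(R_n)_{n\in\mathbb N}$ with $R_0=0$, $R_n\Rightarrow R_{n+1}$, whose limit $R=\lim_n R_n$ satisfies $P\Rightarrow\mathcal B_{0,\vec q}(Q)+\mathcal B_{1,\vec q}(R)$; and replaces (HP.split) by (HT.split), identical except that $(p_\gamma)$ need only be nonnegative reals. $\hookrightarrow^k$ denotes $k$ steps and $\hookrightarrow^*$ the reflexive-transitive closure. *)

From HB Require Import structures.
From mathcomp Require Import all_boot all_order all_algebra.
From mathcomp Require Import complex.
From mathcomp Require Import boolp classical_sets reals topology normedtype sequences exp.

Set Implicit Arguments.
Unset Strict Implicit.
Unset Printing Implicit Defensive.

Import Order.TTheory GRing.Theory Num.Theory.
Import numFieldNormedType.Exports.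
Local Open Scope ring_scope.
Local Open Scope classical_set_scope.

Section QuantumRefinement.

Variable R : realType.
Local Notation C := (R[i]).

Definition rc (x : R) : C := (x%:C)%C.

(* quantum variables qv (a finite set); variable q has classical basis
   Sigma_q = 'I_(dim q).+1, whose element ord0 is the label "0" *)
Variable qv : finType.
Variable dim : qv -> nat.

(* basis labels of the whole space H = H_qVars *)
Definition gT := {dffun forall q : qv, 'I_(dim q).+1}.
(* basis labels Sigma_qs of H_qs, for a set qs of quantum variables *)
Definition regT (qs : {set qv}) :=
  {dffun forall q : {x : qv | x \in qs}, 'I_(dim (sval q)).+1}.

Definition op := 'M[C]_#|gT|.
Definition opq (qs : {set qv}) := 'M[C]_#|regT qs|.

Definition restr (qs : {set qv}) (x : gT) : regT qs := [ffun q => x (sval q)].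

(* A_qs = A (x) I on H *)
Definition liftop (qs : {set qv}) (A : opq qs) : op :=
  \matrix_(i, j)
    (let x : gT := enum_val i in let y : gT := enum_val j in
     if [forall q, (q \notin qs) ==> (x q == y q)]
     then A (enum_rank (restr qs x)) (enum_rank (restr qs y)) else 0).

Definition ketbra (qs : {set qv}) (x y : regT qs) : opq qs :=
  delta_mx (enum_rank x) (enum_rank y).
Definition reg0 (qs : {set qv}) : regT qs := [ffun q => ord0].

Definition adjmx m n (A : 'M[C]_(m, n)) : 'M[C]_(n, m) := (map_mx conjc A)^T.

Definition psd n (A : 'M[C]_n) : Prop :=
  forall v : 'cV[C]_n, 0 <= (adjmx v *m A *m v) 0 0.
Definition lowner n (A B : 'M[C]_n) : Prop := psd (B - A).
Definition is_pred (P : op) : Prop := lowner 0 P /\ lowner P 1%:M.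
Definition is_unitary n (U : 'M[C]_n) : Prop := adjmx U *m U = 1%:M.
Definition is_orth_proj n (Q : 'M[C]_n) : Prop := adjmx Q = Q /\ Q *m Q = Q.
Definition psd_sqrt_of n (S A : 'M[C]_n) : Prop := psd S /\ S *m S = A.
Definition is_measurement qs k (M : 'I_k -> opq qs) : Prop :=
  (forall w, psd (M w)) /\ \sum_(w < k) M w = 1%:M.

(* precondition of initialisation: sum_x |x><0|_qs Q |0><x|_qs *)
Definition init_pre (qs : {set qv}) (Q : op) : op :=
  \sum_(x : regT qs) liftop (ketbra x (reg0 qs)) *m Q *m liftop (ketbra (reg0 qs) x).

Definition mx_lim (f : nat -> op) (L : op) : Prop :=
  forall i j, ((fun n => complex.Re (f n i j)) @ \oo --> complex.Re (L i j)) /\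
              ((fun n => complex.Im (f n i j)) @ \oo --> complex.Im (L i j)).

(* programs with holes; a hole carries a set of specifications (P,Q),
   given as a relation F : op -> op -> Prop *)
Inductive prog : Type :=
| Skip
| Init (qs : {set qv})
| Unit (qs : {set qv}) (U : opq qs)
| Seq (S1 S2 : prog)
| Repeat (N : nat) (S : prog)
| Case (qs : {set qv}) (k : nat) (M : 'I_k -> opq qs) (Ss : 'I_k -> prog)
| While (qs : {set qv}) (B : opq qs) (S : prog)
| Hole (F : op -> op -> Prop).

(* if B[qs] then S1 else S0  :=  case {1 : B, 0 : I - B}[qs] of {1 : S1, 0 : S0} *)
Definition ifte (qs : {set qv}) (B : opq qs) (S1 S0 : prog) : prog :=
  @Case qs 2 (fun w => if w == ord0 then 1%:M - B else B)
                   (fun w => if w == ord0 then S0 else S1).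

Definition hole_is (F : op -> op -> Prop) (L : Type) (Pf Qf : L -> op) : Prop :=
  forall P Q, F P Q <-> exists l, Pf l = P /\ Qf l = Q.

Inductive refine_tot : prog -> prog -> Prop :=
| H_skip F L (Pf Qf : L -> op) :
    hole_is F Pf Qf -> (forall l, lowner (Pf l) (Qf l)) ->
    refine_tot (Hole F) Skip
| H_init F L (Pf Qf : L -> op) qs :
    hole_is F Pf Qf -> (forall l, lowner (Pf l) (init_pre qs (Qf l))) ->
    refine_tot (Hole F) (Init qs)
| H_unit F L (Pf Qf : L -> op) qs (U : opq qs) :
    hole_is F Pf Qf -> is_unitary U ->
    (forall l, lowner (Pf l) (adjmx (liftop U) *m Qf l *m liftop U)) ->
    refine_tot (Hole F) (Unit U)
| H_seq F L (Pf Qf : L -> op) (Rf : L -> op) G1 G2 :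
    hole_is F Pf Qf -> (forall l, is_pred (Rf l)) ->
    hole_is G1 Pf Rf -> hole_is G2 Rf Qf ->
    refine_tot (Hole F) (Seq (Hole G1) (Hole G2))
| HT_split F L (Pf Qf : L -> op) (k : L -> nat) (pw : forall l, 'I_(k l) -> R)
    (Pg Qg : forall l, 'I_(k l) -> op) G :
    hole_is F Pf Qf ->
    (forall l g, 0 <= pw l g) ->
    (forall l g, is_pred (Pg l g) /\ is_pred (Qg l g)) ->
    (forall l, lowner (Pf l) (\sum_(g < k l) rc (pw l g) *: Pg l g)) ->
    (forall l, lowner (\sum_(g < k l) rc (pw l g) *: Qg l g) (Qf l)) ->
    hole_is G (fun lg : {l : L & 'I_(k l)} => Pg (projT1 lg) (projT2 lg))
              (fun lg : {l : L & 'I_(k l)} => Qg (projT1 lg) (projT2 lg)) ->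
    refine_tot (Hole F) (Hole G)
| H_repeat F L (Pf Qf : L -> op) N (Rj : L -> nat -> op) G :
    hole_is F Pf Qf ->
    (forall l j, (j <= N)%N -> is_pred (Rj l j)) ->
    (forall l, lowner (Pf l) (Rj l 0%N)) ->
    (forall l, lowner (Rj l N) (Qf l)) ->
    hole_is G (fun lj : L * 'I_N => Rj lj.1 lj.2) (fun lj : L * 'I_N => Rj lj.1 lj.2.+1) ->
    refine_tot (Hole F) (Repeat N (Hole G))
| H_case F L (Pf Qf : L -> op) qs k (M : 'I_k -> opq qs) (Sq : 'I_k -> opq qs)
    (Pw : L -> 'I_k -> op) (G : 'I_k -> op -> op -> Prop) :
    hole_is F Pf Qf -> is_measurement M ->
    (forall w, psd_sqrt_of (Sq w) (M w)) ->
    (forall l w, is_pred (Pw l w)) ->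
    (forall l, lowner (Pf l)
       (\sum_(w < k) liftop (Sq w) *m Pw l w *m liftop (Sq w))) ->
    (forall w, hole_is (G w) (fun l => Pw l w) Qf) ->
    refine_tot (Hole F) (Case M (fun w => Hole (G w)))
| HT_while F L (Pf Qf : L -> op) qs (B : opq qs) (S0 S1 : opq qs)
    (Rn : L -> nat -> op) (Rlim : L -> op) G :
    hole_is F Pf Qf ->
    lowner 0 B -> lowner B 1%:M ->
    psd_sqrt_of S0 (1%:M - B) -> psd_sqrt_of S1 B ->
    (forall l n, is_pred (Rn l n)) ->
    (forall l, Rn l 0%N = 0) ->
    (forall l n, lowner (Rn l n) (Rn l n.+1)) ->
    (forall l, mx_lim (Rn l) (Rlim l)) ->
    (forall l, lowner (Pf l) (liftop S0 *m Qf l *m liftop S0 +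
                              liftop S1 *m Rlim l *m liftop S1)) ->
    hole_is G (fun ln : L * nat => Rn ln.1 ln.2.+1)
              (fun ln : L * nat => liftop S0 *m Qf ln.1 *m liftop S0 +
                                   liftop S1 *m Rn ln.1 ln.2 *m liftop S1) ->
    refine_tot (Hole F) (While B (Hole G))
| C_seqL S' S T : refine_tot S' S -> refine_tot (Seq S' T) (Seq S T)
| C_seqR S' S T : refine_tot S' S -> refine_tot (Seq T S') (Seq T S)
| C_repeat N S' S : refine_tot S' S -> refine_tot (Repeat N S') (Repeat N S)
| C_case qs k (M : 'I_k -> opq qs) (Ss : 'I_k -> prog) (w : 'I_k) S :
    refine_tot (Ss w) S ->
    refine_tot (Case M Ss) (Case M (fun v => if v == w then S else Ss v))
| C_while qs (B : opq qs) S' S :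
    refine_tot S' S -> refine_tot (While B S') (While B S).

Inductive refine_tot_star : prog -> prog -> Prop :=
| rts_refl S : refine_tot_star S S
| rts_step S1 S2 S3 : refine_tot S1 S2 -> refine_tot_star S2 S3 -> refine_tot_star S1 S3.

End QuantumRefinement.

(* Write Q^perp for the lifted complement (I - Q)_qs.  All intermediate
   predicates have the form Q + c Q^perp or c Q^perp with a scalar c in [0, 1];
   as Q and Q^perp are complementary projections, every side condition of the
   refinement rules reduces to an inequality between scalars.  One round of the
   loop body (branch on Q^perp, then split the hole into (eps Q^perp, Q) and
   (Q^perp, I) with weights 1 - c and c) turns the postcondition Q + c Q^perp
   into the precondition Q + (c + (1 - c) eps) Q^perp.  Starting from c = 0,
   i.e. from the postcondition Q, the coefficient after n rounds is
   1 - (1 - eps)^n.  For the repeat loop it exceeds p once n >= log_{1-eps}(1-p),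
   which yields (pI, Q), while (I, I) is the constant family c = 1.  For the
   while loop the invariants (1 - (1 - eps)^n) Q^perp increase to Q^perp, and
   Q + Q^perp = I. *)

From HB Require Import structures.
From mathcomp Require Import all_boot all_order all_algebra.
From mathcomp Require Import complex.
From mathcomp Require Import boolp classical_sets reals topology normedtype sequences exp.
From mathcomp Require Import ring lra.
Import Order.TTheory GRing.Theory Num.Theory.
Import numFieldNormedType.Exports.
Local Open Scope ring_scope.
Local Open Scope classical_set_scope.
Set Implicit Arguments.
Unset Strict Implicit.
Unset Printing Implicit Defensive.

Section LiftOperator.
Variables (R : realType) (qv : finType) (dim : qv -> nat) (qs : {set qv}).
Local Notation gT := (gT dim).
Local Notation regT := (regT dim qs).
Local Notation opq := (opq R dim qs).

Definition agree_off (x y : gT) : bool := [forall q, (q \notin qs) ==> (x q == y q)].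

Lemma agree_offP (x y : gT) :
  reflect (forall q, q \notin qs -> x q = y q) (agree_off x y).
Proof.
apply: (iffP forallP) => H q; first by move=> nq; move: (H q); rewrite nq => /eqP.
by apply/implyP => nq; rewrite H.
Qed.

Lemma agree_offxx x : agree_off x x.
Proof. by apply/agree_offP. Qed.

Lemma agree_offC x y : agree_off x y = agree_off y x.
Proof. by apply/agree_offP/agree_offP => H q nq; rewrite H. Qed.

Lemma agree_off_trans x y z : agree_off x y -> agree_off y z -> agree_off x z.
Proof. by move=> /agree_offP H1 /agree_offP H2; apply/agree_offP => q nq; rewrite H1 // H2. Qed.

(* The label that reads [r] on [qs] and [x] elsewhere. *)
Definition glue (x : gT) (r : regT) : gT :=
  finfun (fun q => (if q \in qs as b return (q \in qs = b -> 'I_(dim q).+1)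
                   then fun h => r (exist _ q h) else fun _ => x q) erefl).

Lemma glue_in x r q (h : q \in qs) : glue x r q = r (exist _ q h).
Proof.
rewrite ffunE; move: (erefl (q \in qs)).
by rewrite {2 3}h => e; rewrite (eq_irrelevance e h).
Qed.

Lemma glue_out x r q (h : q \notin qs) : glue x r q = x q.
Proof. by rewrite ffunE; move: (erefl (q \in qs)); rewrite {2 3}(negbTE h). Qed.

Lemma restr_glue x r : restr qs (glue x r) = r.
Proof. by apply/ffunP => -[q h]; rewrite ffunE /= glue_in. Qed.

Lemma agree_off_glue x r : agree_off x (glue x r).
Proof. by apply/agree_offP => q nq; rewrite glue_out. Qed.

Lemma glue_restr x y : agree_off x y -> glue x (restr qs y) = y.
Proof.
move=> /agree_offP H; apply/ffunP => q; case: (boolP (q \in qs)) => h.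
  by rewrite glue_in ffunE.
by rewrite glue_out // H.
Qed.

Lemma agree_off_restr_inj x y : agree_off x y -> restr qs x = restr qs y -> x = y.
Proof.
move=> /agree_offP H E; apply/ffunP => q; case: (boolP (q \in qs)) => h; last by rewrite H.
by have := congr1 (fun f : regT => f (exist _ q h)) E; rewrite !ffunE.
Qed.

Lemma liftopE (A : opq) i j : liftop A i j =
  if agree_off (enum_val i) (enum_val j)
  then A (enum_rank (restr qs (enum_val i))) (enum_rank (restr qs (enum_val j))) else 0.
Proof. by rewrite mxE. Qed.

Lemma liftopB (A B : opq) : liftop (A - B) = liftop A - liftop B.
Proof. by apply/matrixP => i j; rewrite !mxE /=; case: ifP => _; rewrite ?subr0 ?mxE. Qed.

Lemma liftop1 : liftop (1%:M : opq) = 1%:M.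
Proof.
apply/matrixP => i j; rewrite liftopE !mxE (inj_eq enum_rank_inj).
case: ifP => [xy|nxy]; last by case: eqP nxy => // ->; rewrite agree_offxx.
by congr (_ : bool)%:R; apply/eqP/eqP => [/(agree_off_restr_inj xy)/enum_val_inj|->].
Qed.

Lemma liftopM (A B : opq) : liftop (A *m B) = liftop A *m liftop B.
Proof.
apply/matrixP => i j; rewrite liftopE !mxE.
set x := enum_val i; set y := enum_val j.
pose F z := (if agree_off x z then A (enum_rank (restr qs x)) (enum_rank (restr qs z)) else 0) *
            (if agree_off z y then B (enum_rank (restr qs z)) (enum_rank (restr qs y)) else 0).
rewrite (eq_bigr (fun k => F (enum_val k))); last by move=> k _; rewrite !liftopE.
rewrite -(big_enum_val F) /F.
case: ifP => Hxy; last first.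
  apply/esym/big1 => z _; case: ifP => H1; case: ifP => H2; rewrite ?mul0r ?mulr0 //.
  by rewrite (agree_off_trans H1 H2) in Hxy.
rewrite (bigID (agree_off x)) /= [X in _ + X]big1 ?addr0; last by move=> z /negbTE ->; rewrite mul0r.
(* the terms indexed by labels agreeing with [x] off [qs] are exactly the [glue x r] *)
rewrite (reindex_onto (glue x) (restr qs)); last by move=> z Hz; rewrite glue_restr.
pose G r := A (enum_rank (restr qs x)) (enum_rank r) * B (enum_rank r) (enum_rank (restr qs y)).
rewrite (eq_bigr (fun k => G (enum_val k))); last by move=> k _; rewrite /G enum_valK.
rewrite -big_enum_val /=; apply: eq_big => r; first by rewrite agree_off_glue restr_glue eqxx.
move=> _; rewrite agree_off_glue restr_glue (agree_off_trans _ Hxy) //.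
by rewrite agree_offC agree_off_glue.
Qed.

Lemma liftop_adj (A : opq) : adjmx (liftop A) = liftop (adjmx A).
Proof.
apply/matrixP => i j; rewrite /adjmx [in RHS]liftopE !mxE /=.
rewrite -/(agree_off (enum_val j) (enum_val i)) agree_offC.
by case: ifP => _; rewrite ?mxE ?conjc0.
Qed.

End LiftOperator.

Section PositiveOperators.
Variables (R : realType) (n : nat).
Local Notation C := (R[i]).
Implicit Types A B : 'M[C]_n.

Lemma psd0 : psd (0 : 'M[C]_n).
Proof. by move=> v; rewrite mulmx0 mul0mx mxE. Qed.

Lemma psdD A B : psd A -> psd B -> psd (A + B).
Proof. by move=> HA HB v; rewrite mulmxDr mulmxDl mxE addr_ge0. Qed.

Lemma psdZ (c : R) A : 0 <= c -> psd A -> psd (rc c *: A).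
Proof. by move=> c0 HA v; rewrite -scalemxAr -scalemxAl mxE mulr_ge0 // ler0c. Qed.

Lemma eq_lowner A B : A = B -> lowner A B.
Proof. by move=> ->; rewrite /lowner subrr; apply: psd0. Qed.

Lemma adjmxM m p (A : 'M[C]_(m, n)) (B : 'M[C]_(n, p)) :
  adjmx (A *m B) = adjmx B *m adjmx A.
Proof. by rewrite /adjmx map_mxM trmx_mul. Qed.

Lemma adjmx1 : adjmx (1%:M : 'M[C]_n) = 1%:M.
Proof. by apply/matrixP => i j; rewrite /adjmx !mxE conjc_nat eq_sym. Qed.

Lemma adjmxB A B : adjmx (A - B) = adjmx A - adjmx B.
Proof. by apply/matrixP => i j; rewrite /adjmx !mxE rmorphB. Qed.

Lemma adjmx_mul_ge0 (w : 'cV[C]_n) : 0 <= (adjmx w *m w) 0 0.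
Proof.
rewrite mxE sumr_ge0 // => k _; rewrite /adjmx !mxE mulrC.
exact: mulcJ_ge0.
Qed.

Lemma orth_proj_psd A : is_orth_proj A -> psd A.
Proof.
move=> [Ha Hi] v.
by rewrite -Hi -{1}Ha mulmxA -adjmxM -mulmxA; apply: adjmx_mul_ge0.
Qed.

Lemma orth_projC A : is_orth_proj A -> is_orth_proj (1%:M - A).
Proof.
move=> [Ha Hi]; split; first by rewrite adjmxB adjmx1 Ha.
by rewrite mulmxBl mul1mx mulmxBr mulmx1 Hi subrr subr0.
Qed.

Lemma orth_proj_sqrt A : is_orth_proj A -> psd_sqrt_of A A.
Proof. by move=> PA; split; [apply: orth_proj_psd | apply: PA.2]. Qed.

Lemma orth_proj_lowner1 A : is_orth_proj A -> lowner A 1%:M.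
Proof. by move=> PA; apply/orth_proj_psd/orth_projC. Qed.

End PositiveOperators.

Lemma orth_proj_measurement (R : realType) (qv : finType) (dim : qv -> nat)
    (qs : {set qv}) (A : opq R dim qs) : is_orth_proj A ->
  is_measurement (fun w : 'I_2 => if w == ord0 then 1%:M - A else A).
Proof.
move=> PA; split; last by rewrite big_ord_recl big_ord1 /= subrK.
by move=> w; case: (w == ord0); apply: orth_proj_psd => //; apply: orth_projC.
Qed.


Lemma rcB (R : realType) (a b : R) : rc (a - b) = rc a - rc b.
Proof. by rewrite /rc rmorphB. Qed.
Lemma rcD (R : realType) (a b : R) : rc (a + b) = rc a + rc b.
Proof. by rewrite /rc rmorphD. Qed.
Lemma rcM (R : realType) (a b : R) : rc (a * b) = rc a * rc b.
Proof. by rewrite /rc rmorphM. Qed.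
Lemma rc1 (R : realType) : rc (1 : R) = 1.
Proof. by rewrite /rc rmorph1. Qed.
Lemma rc0 (R : realType) : rc (0 : R) = 0.
Proof. by rewrite /rc rmorph0. Qed.

Lemma Re_rcM (R : realType) (c : R) (z : R[i]) : complex.Re (rc c * z) = c * complex.Re z.
Proof. by case: z => a b; rewrite /rc /= mul0r subr0. Qed.
Lemma Im_rcM (R : realType) (c : R) (z : R[i]) : complex.Im (rc c * z) = c * complex.Im z.
Proof. by case: z => a b; rewrite /rc /= mul0r addr0. Qed.

Section Boosting.
Variables (R : realType) (eps : R).
Hypothesis eps01 : 0 < eps < 1.

(* The probability that at least one of [n] independent trials of success
   probability [eps] succeeds. *)
Definition boost_coef (n : nat) : R := 1 - (1 - eps) ^+ n.

Lemma boost_coef0 : boost_coef 0 = 0.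
Proof. by rewrite /boost_coef expr0 subrr. Qed.

Lemma boost_coefS n : boost_coef n.+1 = (1 - boost_coef n) * eps + boost_coef n.
Proof. by rewrite /boost_coef exprS; ring. Qed.

Lemma boost_coef_ge0_le1 n : 0 <= boost_coef n <= 1.
Proof.
have [e0 e1] := andP eps01.
have a0 : 0 <= 1 - eps by rewrite subr_ge0 ltW.
have a1 : 1 - eps <= 1 by rewrite lerBlDr lerDl ltW.
by rewrite /boost_coef subr_ge0 exprn_ile1 //= lerBlDr lerDl exprn_ge0.
Qed.

Lemma boost_coef_le_succ n : boost_coef n <= boost_coef n.+1.
Proof.
have /andP[c0 c1] := boost_coef_ge0_le1 n.
by rewrite boost_coefS lerDr mulr_ge0 ?subr_ge0 // ltW; case/andP: eps01.
Qed.

Lemma cvg_boost_coefM (x : R) : (fun n => boost_coef n * x) @ \oo --> x.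
Proof.
have [e0 e1] := andP eps01.
rewrite -[X in _ --> X]mul1r; apply: cvgMr_tmp.
rewrite -[X in _ --> X]subr0; apply: cvgB; first exact: cvg_cst.
by apply: cvg_expr; rewrite ger0_norm ?subr_ge0 ?ltW // ltrBlDr ltrDl.
Qed.

End Boosting.

Lemma boost_count (R : realType) (p eps : R) : 0 < p < 1 -> 0 < eps < p ->
  let N := absz (Num.ceil (ln (1 - p) / ln (1 - eps))) in
  (0 < N)%N /\ p <= boost_coef eps N.
Proof.
move=> /andP[p0 p1] /andP[e0 ep] N.
have a0 : 0 < 1 - eps by rewrite subr_gt0 (lt_trans ep p1).
have b0 : 0 < 1 - p by rewrite subr_gt0.
have la : ln (1 - eps) < 0 by rewrite ln_lt0 // a0 ltrBlDr ltrDl.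
have lb : ln (1 - p) < 0 by rewrite ln_lt0 // b0 ltrBlDr ltrDl.
set r := ln (1 - p) / ln (1 - eps).
have r0 : 0 < r by rewrite /r nmulr_rgt0 // invr_lt0.
have cr : 0 < Num.ceil r by rewrite Num.Theory.ceil_gt0.
have NE : (N%:R : R) = (Num.ceil r)%:~R by rewrite -[X in _ = X%:~R]gez0_abs ?ltW.
split; first by rewrite /N absz_gt0 gt_eqF.
have NR : r <= N%:R by rewrite NE Num.Theory.ceil_ge.
rewrite /boost_coef lerBrDl -lerBrDr -ler_ln ?posrE ?exprn_gt0 // lnXn // -mulr_natr.
have -> : ln (1 - p) = r * ln (1 - eps) by rewrite /r mulfVK // ltr0_neq0.
nra.
Qed.

Section Holes.
Variables (R : realType) (qv : finType) (dim : qv -> nat).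
Local Notation op := (op R dim).
Local Notation prog := (prog R dim).

Definition hole_of (L : Type) (Pf Qf : L -> op) : op -> op -> Prop :=
  fun P Q => exists l, Pf l = P /\ Qf l = Q.

Lemma hole_ofP (L : Type) (Pf Qf : L -> op) : hole_is (hole_of Pf Qf) Pf Qf.
Proof. by []. Qed.

Lemma hole_of_ext (L : Type) (Pf Qf Pf' Qf' : L -> op) :
  Pf =1 Pf' -> Qf =1 Qf' -> hole_is (hole_of Pf' Qf') Pf Qf.
Proof. by move=> eP eQ P Q; split; case=> l [<- <-]; exists l; rewrite eP eQ. Qed.

Lemma refine_tot_star1 (S S' : prog) : refine_tot S S' -> refine_tot_star S S'.
Proof. by move=> H; apply: rts_step H (rts_refl _). Qed.

Lemma refine_tot_star_repeat N (S S' : prog) :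
  refine_tot_star S S' -> refine_tot_star (Repeat N S) (Repeat N S').
Proof. by elim=> [T|S1 S2 S3 H _ IH]; [apply: rts_refl | apply: rts_step (C_repeat N H) IH]. Qed.

End Holes.

Section BoostRefinement.
Variables (R : realType) (qv : finType) (dim : qv -> nat) (qs : {set qv}).
Variable Q : opq R dim qs.
Hypothesis HQ : is_orth_proj Q.
Local Notation op := (op R dim).
Local Notation QL := (liftop Q).
Local Notation PL := (liftop (1%:M - Q)).

Lemma PL_compl : PL = 1%:M - QL.
Proof. by rewrite liftopB liftop1. Qed.

Lemma liftop_compl_compl : liftop (1%:M - (1%:M - Q)) = QL.
Proof. by rewrite opprB addrC subrK. Qed.

Lemma QL_orth_proj : is_orth_proj QL.
Proof. by case: HQ => adjQ idemQ; split; rewrite ?liftop_adj -?liftopM ?adjQ ?idemQ. Qed.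

Lemma PL_orth_proj : is_orth_proj PL.
Proof. by rewrite PL_compl; apply/orth_projC/QL_orth_proj. Qed.

Lemma mulQL_PL : QL *m PL = 0.
Proof. by rewrite PL_compl mulmxBr mulmx1 QL_orth_proj.2 subrr. Qed.

Definition boost_pred (c : R) : op := QL + rc c *: PL.

Lemma boost_pred0 : boost_pred 0 = QL.
Proof. by rewrite /boost_pred rc0 scale0r addr0. Qed.

Lemma boost_pred1 : boost_pred 1 = 1%:M.
Proof. by rewrite /boost_pred rc1 scale1r PL_compl addrC subrK. Qed.

Lemma subr1_boost_pred c : 1%:M - boost_pred c = rc (1 - c) *: PL.
Proof. by rewrite -{1}boost_pred1 /boost_pred opprD addrACA subrr add0r -scalerBl rcB. Qed.

Lemma psd_boost_pred c : 0 <= c -> psd (boost_pred c).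
Proof.
by move=> c0; apply: psdD; [apply/orth_proj_psd/QL_orth_proj | apply/psdZ/orth_proj_psd/PL_orth_proj].
Qed.

Lemma is_pred_boost_pred c : 0 <= c <= 1 -> is_pred (boost_pred c).
Proof.
move=> /andP[c0 c1]; split; rewrite /lowner ?subr0 ?subr1_boost_pred; first exact: psd_boost_pred.
by apply/psdZ/orth_proj_psd/PL_orth_proj; rewrite subr_ge0.
Qed.

Lemma is_pred_scalePL c : 0 <= c <= 1 -> is_pred (rc c *: PL).
Proof.
move=> /andP[c0 c1]; split; rewrite /lowner ?subr0; first exact/psdZ/orth_proj_psd/PL_orth_proj.
have -> : 1%:M - rc c *: PL = boost_pred (1 - c).
  by rewrite -{1}boost_pred1 /boost_pred -addrA -scalerBl -rcB.
by apply: psd_boost_pred; rewrite subr_ge0.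
Qed.

Lemma sandwich_QL c : QL *m boost_pred c *m QL = QL.
Proof. by rewrite mulmxDr -scalemxAr mulQL_PL scaler0 addr0 !QL_orth_proj.2. Qed.

Lemma sandwich_PL c : PL *m (rc c *: PL) *m PL = rc c *: PL.
Proof. by rewrite -scalemxAr -scalemxAl !PL_orth_proj.2. Qed.

Variable eps : R.
Hypothesis eps01 : 0 < eps < 1.

Definition boost_spec : op -> op -> Prop := fun P Q' =>
  (P = rc eps *: PL /\ Q' = QL) \/ (P = PL /\ Q' = 1%:M).

Lemma refine_boost_split (L : Type) (l0 : L) (a b : L -> R) :
  (forall l, 0 <= b l <= 1) -> (forall l, a l = (1 - b l) * eps + b l) ->
  refine_tot (Hole (hole_of (fun l => rc (a l) *: PL) (fun l => boost_pred (b l))))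
             (Hole boost_spec).
Proof.
move=> b01 ab; have [e0 e1] := andP eps01.
apply: (@HT_split _ _ _ _ L _ _ (fun _ => 2%N) (fun l g => if g == ord0 then 1 - b l else b l)
   (fun _ g => if g == ord0 then rc eps *: PL else PL)
   (fun _ g => if g == ord0 then QL else 1%:M)).
- exact: hole_ofP.
- by move=> l g; have /andP[b0 b1] := b01 l; case: (g == ord0); rewrite ?subr_ge0.
- move=> l g; case: (g == ord0); rewrite -?boost_pred0 -?boost_pred1; split.
  + by apply: is_pred_scalePL; rewrite !ltW.
  + by apply: is_pred_boost_pred; rewrite lexx ler01.
  + by rewrite -[PL]scale1r -rc1; apply: is_pred_scalePL; rewrite lexx ler01.
  + by apply: is_pred_boost_pred; rewrite lexx ler01.
- move=> l; apply: eq_lowner; rewrite big_ord_recl big_ord1 /=.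
  by rewrite scalerA -rcM -scalerDl -rcD ab.
- move=> l; apply: eq_lowner; rewrite big_ord_recl big_ord1 /=.
  by rewrite -boost_pred1 /boost_pred scalerDr addrA -scalerDl -rcD subrK rc1 !scale1r.
- move=> P Q'; split.
  + by case=> -[-> ->]; [exists (existT _ l0 ord0) | exists (existT _ l0 ord_max)].
  + by case=> -[l g] /= [<- <-]; rewrite /boost_spec; case: (g == ord0); [left | right].
Qed.


Lemma refine_ifte_boost (L : Type) (l0 : L) (a b : L -> R) :
  (forall l, 0 <= b l <= 1) -> (forall l, a l = (1 - b l) * eps + b l) ->
  refine_tot_star (Hole (hole_of (fun l => boost_pred (a l)) (fun l => boost_pred (b l))))
                  (ifte (1%:M - Q) (Hole boost_spec) (Skip R dim)).
Proof.
move=> b01 ab; have [e0 e1] := andP eps01.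
have a01 l : 0 <= a l <= 1 by have /andP[b0 b1] := b01 l; rewrite ab; apply/andP; split; nra.
pose M (w : 'I_2) : opq R dim qs := if w == ord0 then 1%:M - (1%:M - Q) else 1%:M - Q.
pose Pw l (w : 'I_2) : op := if w == ord0 then boost_pred (b l) else rc (a l) *: PL.
pose G w := hole_of (fun l => Pw l w) (fun l => boost_pred (b l)).
have -> : ifte (1%:M - Q) (Hole boost_spec) (Skip R dim) =
          Case M (fun v => if v == ord_max then Hole boost_spec
                           else if v == ord0 then Skip R dim else Hole (G v)).
  by congr Case; apply: funext => -[[|[|//]] h].
apply: (rts_step (S2 := Case M (fun w => Hole (G w)))).
  apply: (@H_case _ _ _ _ L _ _ qs 2 M M Pw G (hole_ofP _ _)).
  - exact/orth_proj_measurement/orth_projC.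
  - by move=> w; apply: orth_proj_sqrt; rewrite /M; case: (w == ord0); do ?apply: orth_projC.
  - move=> l w; rewrite /Pw; case: (w == ord0).
      exact: is_pred_boost_pred.
    exact: is_pred_scalePL.
  - move=> l; apply: eq_lowner; rewrite big_ord_recl big_ord1 /=.
    by rewrite liftop_compl_compl sandwich_QL sandwich_PL.
  - by [].
apply: (rts_step (@C_case _ _ _ qs 2 M (fun w => Hole (G w)) ord0 (Skip R dim) _)).
  by apply: (@H_skip _ _ _ _ L (fun l => Pw l ord0) (fun l => boost_pred (b l))) => // l; apply: eq_lowner.
apply/refine_tot_star1/(@C_case _ _ _ qs 2 M _ ord_max (Hole boost_spec)).
exact: (refine_boost_split l0 b01 ab).
Qed.

(* The precondition coefficients of the [j]-th round of [Repeat N]: the family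
   [true] refines [(p I, Q)], the family [false] refines [(I, I)]. *)
Definition repeat_coef (N : nat) (b : bool) (j : nat) : R :=
  if b then boost_coef eps (N - j) else 1.

Lemma refine_repeat_boost (p : R) (N : nat) : p <= boost_coef eps N ->
  refine_tot (Hole (fun P Q' => (P = rc p *: 1%:M /\ Q' = QL) \/ (P = 1%:M /\ Q' = 1%:M)))
    (Repeat N (Hole (hole_of
       (fun lj : bool * 'I_N => boost_pred (repeat_coef N lj.1 lj.2))
       (fun lj : bool * 'I_N => boost_pred (repeat_coef N lj.1 lj.2.+1))))).
Proof.
move=> pN; have /andP[c0 c1] := boost_coef_ge0_le1 eps01 N.
apply: (@H_repeat _ _ _ _ bool (fun b => if b then rc p *: 1%:M else 1%:M)
          (fun b => if b then QL else 1%:M) N (fun b j => boost_pred (repeat_coef N b j))).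
- move=> P Q'; split; first by case=> -[-> ->]; [exists true | exists false].
  by case=> -[] [<- <-]; [left | right].
- move=> b j _; apply: is_pred_boost_pred.
  by case: b; rewrite /repeat_coef ?boost_coef_ge0_le1 ?lexx ?ler01.
- case; rewrite /repeat_coef ?subn0; last by rewrite boost_pred1; apply: eq_lowner.
  rewrite /lowner -boost_pred1 /boost_pred rc1 scale1r scalerDr opprD addrACA.
  rewrite -{1}[QL]scale1r -!scalerBl -!rcB.
  by apply: psdD; apply/psdZ/orth_proj_psd; rewrite ?subr_ge0 ?(le_trans pN) //;
    [apply: QL_orth_proj | apply: PL_orth_proj].
- by case; rewrite /repeat_coef ?subnn ?boost_coef0 ?boost_pred0 ?boost_pred1; apply: eq_lowner.
- exact: hole_ofP.
Qed.

Lemma boost_repeat (p : R) (N : nat) : (0 < N)%N -> p <= boost_coef eps N ->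
  refine_tot_star
    (Hole (fun P Q' => (P = rc p *: 1%:M /\ Q' = QL) \/ (P = 1%:M /\ Q' = 1%:M)))
    (Repeat N (ifte (1%:M - Q) (Hole boost_spec) (Skip R dim))).
Proof.
move=> N0 pN; apply: rts_step (refine_repeat_boost pN) _; apply: refine_tot_star_repeat.
apply: (refine_ifte_boost (true, Ordinal N0)) => -[[] j] /=; rewrite /repeat_coef.
- exact: boost_coef_ge0_le1.
- by rewrite lexx ler01.
- by rewrite -boost_coefS subnSK.
- by rewrite subrr mul0r add0r.
Qed.

Lemma refine_while_boost :
  refine_tot (Hole (fun P Q' => P = 1%:M /\ Q' = QL))
    (While (1%:M - Q) (Hole (hole_of
       (fun ln : unit * nat => rc (boost_coef eps ln.2.+1) *: PL)
       (fun ln : unit * nat => boost_pred (boost_coef eps ln.2))))).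
Proof.
have [PQ PPQ] := (orth_projC HQ, orth_projC (orth_projC HQ)).
apply: (@HT_while _ _ _ _ unit (fun _ => 1%:M) (fun _ => QL) qs (1%:M - Q) (1%:M - (1%:M - Q))
          (1%:M - Q) (fun _ n => rc (boost_coef eps n) *: PL) (fun _ => PL)).
- by move=> P Q'; split; [case=> -> ->; exists tt | case=> _ [<- <-]].
- by rewrite /lowner subr0; apply: orth_proj_psd.
- exact: orth_proj_lowner1.
- exact: orth_proj_sqrt.
- exact: orth_proj_sqrt.
- by move=> _ n; apply/is_pred_scalePL/boost_coef_ge0_le1.
- by move=> _; rewrite boost_coef0 rc0 scale0r.
- move=> _ n; rewrite /lowner -scalerBl -rcB; apply/psdZ/orth_proj_psd/PL_orth_proj.
  by rewrite subr_ge0 boost_coef_le_succ.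
- move=> _ i j; split.
  + rewrite (_ : (fun n => _) = fun n => boost_coef eps n * complex.Re (PL i j)).
      exact: cvg_boost_coefM.
    by apply: funext => n; rewrite mxE Re_rcM.
  + rewrite (_ : (fun n => _) = fun n => boost_coef eps n * complex.Im (PL i j)).
      exact: cvg_boost_coefM.
    by apply: funext => n; rewrite mxE Im_rcM.
- move=> _; apply: eq_lowner; rewrite liftop_compl_compl !QL_orth_proj.2 !PL_orth_proj.2.
  by rewrite -boost_pred1 /boost_pred rc1 scale1r.
- apply: hole_of_ext => // -[_ n] /=.
  by rewrite liftop_compl_compl !QL_orth_proj.2 sandwich_PL.
Qed.

Lemma boost_while :
  refine_tot_star (Hole (fun P Q' => P = 1%:M /\ Q' = QL)) (While (1%:M - Q) (Hole boost_spec)).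
Proof.
apply: rts_step refine_while_boost _; apply/refine_tot_star1/C_while.
exact: (refine_boost_split (tt, 0%N) (fun _ => boost_coef_ge0_le1 eps01 _)
                                     (fun _ => boost_coefS _ _)).
Qed.

End BoostRefinement.

Theorem mainTheorem6 (R : realType) (qv : finType) (dim : qv -> nat)
    (qs : {set qv}) (Q : opq R dim qs) :
  is_orth_proj Q ->
  (* (a) H.boostRep *)
  (forall p eps : R, 0 < p < 1 -> 0 < eps < p ->
     refine_tot_star
       (Hole (fun P Q' => (P = rc p *: 1%:M /\ Q' = liftop Q) \/
                          (P = 1%:M /\ Q' = 1%:M)))
       (Repeat (absz (Num.ceil (ln (1 - p) / ln (1 - eps))))
          (ifte (1%:M - Q)
             (Hole (fun P Q' => (P = rc eps *: liftop (1%:M - Q) /\ Q' = liftop Q) \/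
                                (P = liftop (1%:M - Q) /\ Q' = 1%:M)))
             (Skip R dim)))) /\
  (* (b) H.boostWhile *)
  (forall eps : R, 0 < eps < 1 ->
     refine_tot_star
       (Hole (fun P Q' => P = 1%:M /\ Q' = liftop Q))
       (While (1%:M - Q)
          (Hole (fun P Q' => (P = rc eps *: liftop (1%:M - Q) /\ Q' = liftop Q) \/
                             (P = liftop (1%:M - Q) /\ Q' = 1%:M))))).
Proof.
move=> HQ; split=> [p eps p01 e0p | eps eps01]; last exact: boost_while.
have [N0 pN] := boost_count p01 e0p.
have eps01 : 0 < eps < 1.
  by case/andP: p01 => _ p1; case/andP: e0p => e0 ep; rewrite e0 (lt_trans ep p1).
exact: boost_repeat.
Qed.
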